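(* Let $\alpha\in(0,1)$, $\sigma=1-\alpha/2$, and let $0=t_0<t_1<\cdots$ be a time mesh with $\tau_j=t_j-t_{j-1}$, $\rho_j=\tau_j/\tau_{j-1}$, such that for every $k\ge2$: $\rho_k>\rho_*$, $\rho_{k+1}>\rho_*$, and if $\rho_k<\eta$ then $\rho_{k+1}\le \rho_k^2(1+\rho_k)/(1-3\rho_k^2(1+\rho_k))$. Let the lower-triangular entries $[\mathbf M]_{k,j}$ be as defined in the context. Then: (Q1) for all $1\le j\le k$, $$[\mathbf M]_{k,j}\ge\frac{\rho_*}{(1+\rho_* )\tau_j}\int_{t_{j-1}}^{\min\{t_j,t_k^*\}}(t_k^*-s)^{-\alpha}\,\mathrm ds;$$ (Q2) for all $2\le j\le k-1$, $$[\mathbf M]_{k,j}-[\mathbf M]_{k,j-1}\ge\frac{\alpha\tau_j}{\tau_j+\tau_{j+1}}\int_0^1(\tau_j+\tau_{j+1}-s\tau_j)(1-s)(t_k^*-t_{j-1}-s\tau_j)^{-\alpha-1}\,\mathrm ds,$$ and for all $k\ge2$, $[\mathbf M]_{k,k}-[\mathbf M]_{k,k-1}\ge\dfrac{\alpha}{2(1-\alpha)(\sigma\tau_k)^\alpha}$; (Q3) if moreover $\rho_k\ge\eta$ for all $k\ge2$, then $\frac{1-\alpha}{\sigma}[\mathbf M]_{k,k}-[\mathbf M]_{k,k-1}\ge0$ for all $k\ge2$.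
   Context: Notation: $t_k^*=t_{k-1}+\sigma\tau_k$. For $k\ge2$ and $1\le j\le k-1$ define $$a_j^k=\int_0^1\frac{-2\tau_j(1-\theta)-\tau_{j+1}}{(\tau_j+\tau_{j+1})\,(t_k^*-t_{j-1}-\theta\tau_j)^\alpha}\,\mathrm d\theta,\qquad c_j^k=\int_0^1\frac{\tau_j^2(2\theta-1)}{\tau_{j+1}(\tau_j+\tau_{j+1})\,(t_k^*-t_{j-1}-\theta\tau_j)^\alpha}\,\mathrm d\theta,$$ and $d_j^k=c_{j-1}^k-a_j^k$ for $2\le j\le k-1$. The entries $[\mathbf M]_{k,j}$, $1\le j\le k$, are: $[\mathbf M]_{1,1}=\frac{\sigma^{1-\alpha}}{(1-\alpha)\tau_1^\alpha}$; for $k\ge2$, $[\mathbf M]_{k,1}=-a_1^k$, $[\mathbf M]_{k,j}=d_j^k$ for $2\le j\le k-1$, and $[\mathbf M]_{k,k}=c_{k-1}^k+\frac{\sigma^{1-\alpha}}{(1-\alpha)\tau_k^\alpha}$. $\rho_*\approx 0.356341$ is the unique positive root of $\rho(1+\rho)=1-3\rho^2(1+\rho)$, and $\eta\approx0.475329$ is the unique positive root of $1-3\rho^2(1+\rho)=0$. *)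

From Stdlib Require Import Reals Lra.
From Coquelicot Require Import Coquelicot.
Open Scope R_scope.

Definition tau (t : nat -> R) (j : nat) : R := t j - t (j - 1)%nat.
Definition rho (t : nat -> R) (j : nat) : R := tau t j / tau t (j - 1)%nat.
Definition sig (alpha : R) : R := 1 - alpha / 2.
Definition tstar (alpha : R) (t : nat -> R) (k : nat) : R :=
  t (k - 1)%nat + sig alpha * tau t k.

Definition acoef (alpha : R) (t : nat -> R) (k j : nat) : R :=
  RInt (fun th =>
    (- 2 * tau t j * (1 - th) - tau t (j + 1)%nat) /
    ((tau t j + tau t (j + 1)%nat) *
     Rpower (tstar alpha t k - t (j - 1)%nat - th * tau t j) alpha)) 0 1.

Definition ccoef (alpha : R) (t : nat -> R) (k j : nat) : R :=
  RInt (fun th =>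
    (tau t j ^ 2 * (2 * th - 1)) /
    (tau t (j + 1)%nat * (tau t j + tau t (j + 1)%nat) *
     Rpower (tstar alpha t k - t (j - 1)%nat - th * tau t j) alpha)) 0 1.

Definition dcoef (alpha : R) (t : nat -> R) (k j : nat) : R :=
  ccoef alpha t k (j - 1)%nat - acoef alpha t k j.

Definition diag_term (alpha : R) (t : nat -> R) (k : nat) : R :=
  Rpower (sig alpha) (1 - alpha) / ((1 - alpha) * Rpower (tau t k) alpha).

(* [M]_{k,j} for 1 <= j <= k (0 elsewhere, never used) *)
Definition Mentry (alpha : R) (t : nat -> R) (k j : nat) : R :=
  if andb (Nat.leb 1 j) (Nat.leb j k) then
    if Nat.eqb j k then
      (if Nat.eqb k 1 then diag_term alpha t 1
       else ccoef alpha t k (k - 1)%nat + diag_term alpha t k)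
    else if Nat.eqb j 1 then - acoef alpha t k 1
    else dcoef alpha t k j
  else 0.

From Stdlib Require Import Reals Lra Lia.
From Coquelicot Require Import Coquelicot.
Open Scope R_scope.

(* With B = t_k^* - t_{j-1} and h = tau_j, the coefficients a_j^k and c_j^k are
   combinations of the mean I and the odd moment P = int_0^1 (2x-1) g of the convex
   kernel g(x) = (B - x h)^(-alpha).  Comparing g with its tangents gives
   g'(0)/6 <= P <= g'(1)/6 and g(1) - I >= g'(0)/2.  The slope g'(0) of cell j and the
   slope g'(1) of cell j-1 carry the same factor (t_k^* - t_{j-1})^(-alpha-1), so each
   difference of neighbouring entries is bounded below by that factor times a rational
   function of the step ratios rho_j, rho_{j+1}; its sign is exactly what the mesh
   condition (or rho_j >= eta) provides.  The integrals in Q1 and Q2 are evaluated in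
   closed form, the one in Q2 by parts in terms of I and P. *)

Lemma Rpower_pos x c : 0 < Rpower x c.
Proof. apply exp_pos. Qed.

Lemma Rpower_sub_1 y c : 0 < y -> Rpower y (c - 1) = Rpower y c / y.
Proof. intros Hy. unfold Rminus. rewrite Rpower_plus, Rpower_Ropp, Rpower_1; auto. Qed.

Lemma Rpower_antitone c x y : c <= 0 -> 0 < x <= y -> Rpower y c <= Rpower x c.
Proof.
  intros Hc Hxy. replace c with (- - c) by ring. rewrite !(Rpower_Ropp _ (- c)).
  apply Rinv_le_contravar; [apply Rpower_pos | apply Rle_Rpower_l; lra].
Qed.

Lemma Rpower_tangent_le c x y : c <= 0 -> 0 < x -> 0 < y ->
  Rpower y c + c * Rpower y (c - 1) * (x - y) <= Rpower x c.
Proof.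
  intros Hc Hx Hy.
  assert (Hxy : 0 < x / y) by (apply Rdiv_lt_0_compat; lra).
  assert (Hsplit : Rpower x c = Rpower y c * exp (c * ln (x / y))).
  { rewrite ln_div by lra. unfold Rpower. rewrite <- exp_plus. f_equal. ring. }
  (* [ln u <= u - 1] and [c <= 0] give [exp (c ln (x/y)) >= 1 + c (x/y - 1)] *)
  assert (Hln : ln (x / y) <= x / y - 1).
  { pose proof (exp_ineq1_le (ln (x / y))) as H. rewrite exp_ln in H; lra. }
  pose proof (exp_ineq1_le (c * ln (x / y))) as Hexp.
  pose proof (Rpower_pos y c) as Hyc.
  rewrite Hsplit, Rpower_sub_1 by lra.
  replace (Rpower y c + c * (Rpower y c / y) * (x - y))
    with (Rpower y c * (1 + c * (x / y - 1))) by (field; lra).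
  apply Rmult_le_compat_l; nra.
Qed.

Lemma is_derive_Rpower_affine B h c x : 0 < B - x * h ->
  is_derive (fun y => Rpower (B - y * h) c) x (- c * h * Rpower (B - x * h) (c - 1)).
Proof.
  intros Hpos.
  assert (Hin : is_derive (fun y => B - y * h) x (- h)) by (auto_derive; [exact I | ring]).
  assert (Hout : is_derive (fun z => Rpower z c) (B - x * h) (c * Rpower (B - x * h) (c - 1)))
    by (apply is_derive_Reals, derivable_pt_lim_power, Hpos).
  replace (- c * h * Rpower (B - x * h) (c - 1)) with (scal (- h) (c * Rpower (B - x * h) (c - 1)))
    by (unfold scal; simpl; unfold mult; simpl; ring).
  exact (is_derive_comp (fun z => Rpower z c) (fun y => B - y * h) x _ _ Hout Hin).
Qed.

Lemma continuous_Rpower_affine B h c x : 0 < B - x * h ->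
  continuous (fun y => Rpower (B - y * h) c) x.
Proof.
  intros Hpos. apply (ex_derive_continuous (K := R_AbsRing) (V := R_NormedModule)).
  eexists. apply is_derive_Rpower_affine, Hpos.
Qed.

Lemma is_RInt_quadratic p0 p1 p2 :
  is_RInt (fun x => p0 + p1 * x + p2 * x ^ 2) 0 1 (p0 + p1 / 2 + p2 / 3).
Proof.
  set (F := fun x => p0 * x + p1 * x ^ 2 / 2 + p2 * x ^ 3 / 3).
  replace (p0 + p1 / 2 + p2 / 3) with (minus (F 1) (F 0))
    by (unfold F, minus, plus, opp; simpl; field).
  apply (is_RInt_derive (V := R_CompleteNormedModule)).
  - intros x _. unfold F. auto_derive; [exact I | field].
  - intros x _. apply (ex_derive_continuous (K := R_AbsRing) (V := R_NormedModule)).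
    auto_derive. exact I.
Qed.

Lemma is_RInt_le_quadratic f I p0 p1 p2 : is_RInt f 0 1 I ->
  (forall x, 0 < x < 1 -> f x <= p0 + p1 * x + p2 * x ^ 2) -> I <= p0 + p1 / 2 + p2 / 3.
Proof. intros Hf. exact (is_RInt_le _ _ 0 1 _ _ Rle_0_1 Hf (is_RInt_quadratic p0 p1 p2)). Qed.

Lemma is_RInt_ge_quadratic f I p0 p1 p2 : is_RInt f 0 1 I ->
  (forall x, 0 < x < 1 -> p0 + p1 * x + p2 * x ^ 2 <= f x) -> p0 + p1 / 2 + p2 / 3 <= I.
Proof. intros Hf. exact (is_RInt_le _ _ 0 1 _ _ Rle_0_1 (is_RInt_quadratic p0 p1 p2) Hf). Qed.

Section ConvexMoments.
Variables g dg : R -> R.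
Hypothesis g_tangent : forall x y, 0 <= x <= 1 -> 0 <= y <= 1 -> g y + dg y * (x - y) <= g x.
Hypothesis dg_mono : forall x y, 0 <= x -> x <= y -> y <= 1 -> dg x <= dg y.

Lemma odd_moment_ge P : is_RInt (fun x => (2 * x - 1) * g x) 0 1 P -> dg 0 / 6 <= P.
Proof.
  intros HP.
  replace (dg 0 / 6) with ((dg 0 / 2 - g (1 / 2)) + (2 * g (1 / 2) - 2 * dg 0) / 2 + (2 * dg 0) / 3)
    by field.
  apply (is_RInt_ge_quadratic _ _ _ _ _ HP). intros x Hx.
  (* on each side of 1/2, the tangent at the point nearer 0 has slope at least [dg 0] *)
  enough (0 <= (2 * x - 1) * (g x - g (1 / 2) - dg 0 * (x - 1 / 2))) by lra.
  destruct (Rle_dec (1 / 2) x).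
  - pose proof (g_tangent x (1 / 2) ltac:(lra) ltac:(lra)).
    pose proof (dg_mono 0 (1 / 2) ltac:(lra) ltac:(lra) ltac:(lra)).
    apply Rmult_le_pos; nra.
  - pose proof (g_tangent (1 / 2) x ltac:(lra) ltac:(lra)).
    pose proof (dg_mono 0 x ltac:(lra) ltac:(lra) ltac:(lra)).
    enough (0 <= (1 - 2 * x) * - (g x - g (1 / 2) - dg 0 * (x - 1 / 2))) by lra.
    apply Rmult_le_pos; nra.
Qed.

Lemma odd_moment_le P : is_RInt (fun x => (2 * x - 1) * g x) 0 1 P -> P <= dg 1 / 6.
Proof.
  intros HP.
  replace (dg 1 / 6) with ((dg 1 / 2 - g (1 / 2)) + (2 * g (1 / 2) - 2 * dg 1) / 2 + (2 * dg 1) / 3)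
    by field.
  apply (is_RInt_le_quadratic _ _ _ _ _ HP). intros x Hx.
  enough (0 <= (2 * x - 1) * (g (1 / 2) + dg 1 * (x - 1 / 2) - g x)) by lra.
  destruct (Rle_dec (1 / 2) x).
  - pose proof (g_tangent (1 / 2) x ltac:(lra) ltac:(lra)).
    pose proof (dg_mono x 1 ltac:(lra) ltac:(lra) ltac:(lra)).
    apply Rmult_le_pos; nra.
  - pose proof (g_tangent x (1 / 2) ltac:(lra) ltac:(lra)).
    pose proof (dg_mono (1 / 2) 1 ltac:(lra) ltac:(lra) ltac:(lra)).
    enough (0 <= (1 - 2 * x) * - (g (1 / 2) + dg 1 * (x - 1 / 2) - g x)) by lra.
    apply Rmult_le_pos; nra.
Qed.

Lemma mean_le_endpoint I : is_RInt g 0 1 I -> dg 0 / 2 <= g 1 - I.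
Proof.
  intros HI.
  enough (I <= (g 1 - dg 0) + dg 0 / 2 + 0 / 3) by lra.
  apply (is_RInt_le_quadratic _ _ _ _ _ HI). intros x Hx.
  pose proof (g_tangent 1 x ltac:(lra) ltac:(lra)).
  pose proof (dg_mono 0 x ltac:(lra) ltac:(lra) ltac:(lra)).
  nra.
Qed.

End ConvexMoments.

Definition kernel_mean (al B h : R) : R := RInt (fun x => Rpower (B - x * h) (- al)) 0 1.
Definition kernel_odd (al B h : R) : R :=
  RInt (fun x => (2 * x - 1) * Rpower (B - x * h) (- al)) 0 1.

Section PowerKernel.
Variables al B h : R.
Hypothesis Hal : 0 < al < 1.
Hypothesis Hh : 0 < h.
Hypothesis HhB : h < B.

Lemma kernel_base_pos x : 0 <= x <= 1 -> 0 < B - x * h.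
Proof. intros. nra. Qed.

Lemma continuous_kernel_mul c (p : R -> R) x : continuous p x -> 0 <= x <= 1 ->
  continuous (fun y => p y * Rpower (B - y * h) c) x.
Proof.
  intros Hp Hx. apply (continuous_mult (K := R_AbsRing)); [exact Hp |].
  apply continuous_Rpower_affine, kernel_base_pos, Hx.
Qed.

Lemma ex_RInt_kernel c (p : R -> R) : (forall x, continuous p x) ->
  ex_RInt (fun x => p x * Rpower (B - x * h) c) 0 1.
Proof.
  intros Hp. apply (ex_RInt_continuous (V := R_CompleteNormedModule)).
  intros x Hx. rewrite Rmin_left, Rmax_right in Hx by lra.
  apply continuous_kernel_mul; [apply Hp | exact Hx].
Qed.

Lemma is_RInt_kernel_mean :
  is_RInt (fun x => Rpower (B - x * h) (- al)) 0 1 (kernel_mean al B h).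
Proof.
  apply (RInt_correct (V := R_CompleteNormedModule)).
  apply (ex_RInt_ext (fun x => 1 * Rpower (B - x * h) (- al))); [intros; apply Rmult_1_l |].
  apply ex_RInt_kernel. intros. apply continuous_const.
Qed.

Lemma is_RInt_kernel_odd :
  is_RInt (fun x => (2 * x - 1) * Rpower (B - x * h) (- al)) 0 1 (kernel_odd al B h).
Proof.
  apply (RInt_correct (V := R_CompleteNormedModule)), ex_RInt_kernel.
  intros. apply (ex_derive_continuous (K := R_AbsRing) (V := R_NormedModule)).
  auto_derive. exact I.
Qed.

Lemma kernel_tangent x y : 0 <= x <= 1 -> 0 <= y <= 1 ->
  Rpower (B - y * h) (- al) + al * h * Rpower (B - y * h) (- al - 1) * (x - y)
  <= Rpower (B - x * h) (- al).
Proof.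
  intros Hx Hy.
  pose proof (Rpower_tangent_le (- al) _ _ ltac:(lra)
                (kernel_base_pos x Hx) (kernel_base_pos y Hy)) as Htan.
  replace (al * h * Rpower (B - y * h) (- al - 1) * (x - y))
    with (- al * Rpower (B - y * h) (- al - 1) * (B - x * h - (B - y * h))) by ring.
  exact Htan.
Qed.

Lemma kernel_slope_mono x y : 0 <= x -> x <= y -> y <= 1 ->
  al * h * Rpower (B - x * h) (- al - 1) <= al * h * Rpower (B - y * h) (- al - 1).
Proof.
  intros Hx Hxy Hy. apply Rmult_le_compat_l; [nra |].
  apply Rpower_antitone; [lra | split; [apply kernel_base_pos |]; nra].
Qed.

Lemma kernel_odd_ge : al * h * Rpower B (- al - 1) / 6 <= kernel_odd al B h.
Proof.
  replace B with (B - 0 * h) at 1 by ring.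
  exact (odd_moment_ge _ (fun x => al * h * Rpower (B - x * h) (- al - 1))
           kernel_tangent kernel_slope_mono _ is_RInt_kernel_odd).
Qed.

Lemma kernel_odd_le : kernel_odd al B h <= al * h * Rpower (B - h) (- al - 1) / 6.
Proof.
  replace (B - h) with (B - 1 * h) by ring.
  exact (odd_moment_le _ (fun x => al * h * Rpower (B - x * h) (- al - 1))
           kernel_tangent kernel_slope_mono _ is_RInt_kernel_odd).
Qed.

Lemma kernel_mean_le :
  al * h * Rpower B (- al - 1) / 2 <= Rpower (B - h) (- al) - kernel_mean al B h.
Proof.
  replace (B - h) with (B - 1 * h) by ring. replace B with (B - 0 * h) at 1 by ring.
  exact (mean_le_endpoint (fun x => Rpower (B - x * h) (- al))
           (fun x => al * h * Rpower (B - x * h) (- al - 1))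
           kernel_tangent kernel_slope_mono _ is_RInt_kernel_mean).
Qed.

Lemma kernel_odd_le_mean : kernel_odd al B h <= kernel_mean al B h.
Proof.
  apply (is_RInt_le _ _ 0 1 _ _ Rle_0_1 is_RInt_kernel_odd is_RInt_kernel_mean).
  intros x Hx. pose proof (Rpower_pos (B - x * h) (- al)). nra.
Qed.

Lemma kernel_mean_nonneg : 0 <= kernel_mean al B h.
Proof.
  enough (0 + 0 / 2 + 0 / 3 <= kernel_mean al B h) by lra.
  apply (is_RInt_ge_quadratic _ _ _ _ _ is_RInt_kernel_mean).
  intros x _. pose proof (Rpower_pos (B - x * h) (- al)). lra.
Qed.

Lemma kernel_acoef h' : 0 < h' ->
  RInt (fun th => (- 2 * h * (1 - th) - h') / ((h + h') * Rpower (B - th * h) al)) 0 1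
  = h * kernel_odd al B h / (h + h') - kernel_mean al B h.
Proof.
  intros Hh'. apply is_RInt_unique.
  pose proof (is_RInt_plus _ _ _ _ _ _
    (is_RInt_scal _ _ _ (h / (h + h')) _ is_RInt_kernel_odd)
    (is_RInt_scal _ _ _ (- 1) _ is_RInt_kernel_mean)) as Hsum.
  replace (h * kernel_odd al B h / (h + h') - kernel_mean al B h)
    with (plus (scal (h / (h + h')) (kernel_odd al B h)) (scal (- 1) (kernel_mean al B h)))
    by (unfold plus, scal; simpl; unfold mult; simpl; field; lra).
  refine (is_RInt_ext _ _ _ _ _ _ Hsum). intros x _.
  unfold plus, scal; simpl; unfold mult; simpl.
  rewrite Rpower_Ropp. pose proof (Rpower_pos (B - x * h) al). field. lra.
Qed.

Lemma kernel_ccoef h' : 0 < h' ->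
  RInt (fun th => h ^ 2 * (2 * th - 1) / (h' * (h + h') * Rpower (B - th * h) al)) 0 1
  = h ^ 2 * kernel_odd al B h / (h' * (h + h')).
Proof.
  intros Hh'. apply is_RInt_unique.
  pose proof (is_RInt_scal _ _ _ (h ^ 2 / (h' * (h + h'))) _ is_RInt_kernel_odd) as Hs.
  replace (h ^ 2 * kernel_odd al B h / (h' * (h + h')))
    with (scal (h ^ 2 / (h' * (h + h'))) (kernel_odd al B h))
    by (unfold scal; simpl; unfold mult; simpl; field; lra).
  refine (is_RInt_ext _ _ _ _ _ _ Hs). intros x _.
  unfold scal; simpl; unfold mult; simpl.
  rewrite Rpower_Ropp. pose proof (Rpower_pos (B - x * h) al). field. lra.
Qed.

Lemma kernel_mean_eq :
  kernel_mean al B h = (Rpower B (1 - al) - Rpower (B - h) (1 - al)) / ((1 - al) * h).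
Proof.
  set (F := fun x => - / ((1 - al) * h) * Rpower (B - x * h) (1 - al)).
  replace ((Rpower B (1 - al) - Rpower (B - h) (1 - al)) / ((1 - al) * h))
    with (minus (F 1) (F 0))
    by (unfold F, minus, plus, opp; simpl; rewrite Rmult_0_l, Rmult_1_l, Rminus_0_r; field; lra).
  apply is_RInt_unique, (is_RInt_derive (V := R_CompleteNormedModule)).
  - intros x Hx. rewrite Rmin_left, Rmax_right in Hx by lra.
    pose proof (is_derive_scal _ x (- / ((1 - al) * h)) _
                  (is_derive_Rpower_affine B h (1 - al) x (kernel_base_pos x Hx))) as HF.
    replace (1 - al - 1) with (- al) in HF by ring.
    replace (Rpower (B - x * h) (- al))
      with (- / ((1 - al) * h) * (- (1 - al) * h * Rpower (B - x * h) (- al))) by (field; lra).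
    exact HF.
  - intros x Hx. rewrite Rmin_left, Rmax_right in Hx by lra.
    apply continuous_Rpower_affine, kernel_base_pos, Hx.
Qed.

Lemma kernel_weighted_integral h' :
  RInt (fun s => (h + h' - s * h) * (1 - s) * Rpower (B - s * h) (- al - 1)) 0 1
  = ((h + h') * (kernel_mean al B h - Rpower B (- al)) - h * kernel_odd al B h) / (al * h).
Proof.
  (* integrate by parts against [p x = (1 - x) (h + h' - x h)], which vanishes at [x = 1] *)
  set (p := fun x => (1 - x) * (h * (1 - x) + h')).
  set (H := fun x => p x * Rpower (B - x * h) (- al)).
  set (dH := fun x => - (2 * h * (1 - x) + h') * Rpower (B - x * h) (- al)
                      + al * h * p x * Rpower (B - x * h) (- al - 1)).
  assert (HdH : is_RInt dH 0 1 (minus (H 1) (H 0))).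
  { apply (is_RInt_derive (V := R_CompleteNormedModule));
      intros x Hx; rewrite Rmin_left, Rmax_right in Hx by lra.
    - assert (Hp : is_derive p x (- (2 * h * (1 - x) + h')))
        by (unfold p; auto_derive; [exact I | ring]).
      pose proof (is_derive_mult _ _ x _ _ Hp
                    (is_derive_Rpower_affine B h (- al) x (kernel_base_pos x Hx))
                    (fun _ _ => Rmult_comm _ _)) as HM.
      match type of HM with is_derive _ _ ?l => replace (dH x) with l; [exact HM |] end.
      unfold dH, plus, mult; simpl. unfold mult; simpl. ring.
    - apply (continuous_plus (V := R_NormedModule)); apply continuous_kernel_mul; try exact Hx;
        apply (ex_derive_continuous (K := R_AbsRing) (V := R_NormedModule)); unfold p;
        auto_derive; exact I. }
  pose proof (is_RInt_scal _ _ _ (/ (al * h)) _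
    (is_RInt_plus _ _ _ _ _ _ HdH
      (is_RInt_plus _ _ _ _ _ _ (is_RInt_scal _ _ _ (h + h') _ is_RInt_kernel_mean)
                                (is_RInt_scal _ _ _ (- h) _ is_RInt_kernel_odd)))) as Hs.
  apply is_RInt_unique.
  match type of Hs with is_RInt _ _ _ ?v => replace (_ / (al * h)) with v end.
  - refine (is_RInt_ext _ _ _ _ _ _ Hs). intros x _.
    unfold dH, p, scal, plus; simpl. unfold mult; simpl. field. lra.
  - unfold H, p, scal, minus, plus, opp; simpl. unfold mult; simpl.
    replace (B - 0 * h) with B by ring. field. lra.
Qed.

End PowerKernel.

Lemma ball_R x e y : ball x e y <-> Rabs (y - x) < e.
Proof. reflexivity. Qed.

Lemma is_RInt_gen_at_left_derive (f F : R -> R) a b L : a < b ->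
  (forall x, a <= x < b -> is_derive F x (f x)) ->
  (forall x, a <= x < b -> continuous f x) ->
  filterlim F (at_left b) (locally L) ->
  is_RInt_gen f (at_point a) (at_left b) (L - F a).
Proof.
  intros Hab HD HC HL P [eps HP].
  destruct (proj1 (filterlim_locally _ _) HL eps) as [d Hd].
  apply Filter_prod with (Q := fun x => x = a)
                         (R := fun y => a < y < b /\ ball L eps (F y)).
  - reflexivity.
  - assert (Hpos : 0 < Rmin d (b - a)) by (apply Rmin_pos; [apply cond_pos | lra]).
    exists (mkposreal _ Hpos). intros y Hy Hyb. simpl in Hy. rewrite ball_R in Hy.
    pose proof (Rmin_l d (b - a)). pose proof (Rmin_r d (b - a)).
    apply Rabs_lt_between in Hy.
    split; [lra | apply Hd; [rewrite ball_R; apply Rabs_lt_between; lra | exact Hyb]].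
  - intros x y -> [Hy Hball]. exists (minus (F y) (F a)). split.
    + apply (is_RInt_derive (V := R_CompleteNormedModule));
        intros z Hz; rewrite Rmin_left, Rmax_right in Hz by lra; [apply HD | apply HC]; lra.
    + apply HP. rewrite ball_R in *. unfold minus, plus, opp; simpl.
      replace (F y + - F a - (L - F a)) with (F y - L) by ring. exact Hball.
Qed.

Lemma Rpower_lt_near_0 c eps : 0 < c -> 0 < eps ->
  exists d, 0 < d /\ forall z, 0 < z < d -> Rpower z c < eps.
Proof.
  intros Hc He. exists (exp (ln eps / c)). split; [apply exp_pos |].
  intros z [Hz Hzd]. unfold Rpower. rewrite <- (exp_ln eps He). apply exp_increasing.
  apply ln_increasing in Hzd; [| exact Hz]. rewrite ln_exp in Hzd.
  apply (Rmult_lt_compat_l c) in Hzd; [| exact Hc].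
  replace (c * (ln eps / c)) with (ln eps) in Hzd by (field; lra). lra.
Qed.

Section SingularKernel.
Variables al T : R.
Hypothesis Hal : 0 < al < 1.

Let F s := - Rpower (T - s) (1 - al) / (1 - al).

Lemma continuous_singular x : x < T -> continuous (fun s => Rpower (T - s) (- al)) x.
Proof.
  intros Hx. apply (continuous_ext (fun s => Rpower (T - s * 1) (- al))).
  - intros s. rewrite Rmult_1_r. reflexivity.
  - apply continuous_Rpower_affine. lra.
Qed.

Lemma is_derive_singular_primitive x : x < T -> is_derive F x (Rpower (T - x) (- al)).
Proof.
  intros Hx.
  pose proof (is_derive_scal _ x (- / (1 - al)) _
                (is_derive_Rpower_affine T 1 (1 - al) x ltac:(lra))) as HF.
  match type of HF with is_derive _ _ ?l => replace (Rpower (T - x) (- al)) with l end.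
  - refine (is_derive_ext _ _ _ _ _ HF). intros y. unfold F. simpl.
    rewrite Rmult_1_r. field. lra.
  - replace (1 - al - 1) with (- al) by ring. rewrite !Rmult_1_r. field. lra.
Qed.

Lemma is_RInt_gen_singular a b : a < b -> b < T ->
  is_RInt_gen (fun s => Rpower (T - s) (- al)) (at_point a) (at_left b)
    ((Rpower (T - a) (1 - al) - Rpower (T - b) (1 - al)) / (1 - al)).
Proof.
  intros Hab HbT.
  replace ((Rpower (T - a) (1 - al) - Rpower (T - b) (1 - al)) / (1 - al)) with (F b - F a)
    by (unfold F; field; lra).
  apply is_RInt_gen_at_left_derive; [exact Hab | | |].
  - intros x Hx. apply is_derive_singular_primitive. lra.
  - intros x Hx. apply continuous_singular. lra.
  - intros P HP. apply (ex_derive_continuous (K := R_AbsRing) (V := R_NormedModule)) in HP;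
      [| eexists; apply is_derive_singular_primitive; lra].
    destruct HP as [e He]. exists e. intros y Hy _. exact (He y Hy).
Qed.

Lemma is_RInt_gen_singular_end a : a < T ->
  is_RInt_gen (fun s => Rpower (T - s) (- al)) (at_point a) (at_left T)
    (Rpower (T - a) (1 - al) / (1 - al)).
Proof.
  intros Ha.
  replace (Rpower (T - a) (1 - al) / (1 - al)) with (0 - F a) by (unfold F; field; lra).
  apply is_RInt_gen_at_left_derive; [exact Ha | | |].
  - intros x Hx. apply is_derive_singular_primitive. lra.
  - intros x Hx. apply continuous_singular. lra.
  - apply filterlim_locally. intros eps.
    destruct (Rpower_lt_near_0 (1 - al) (eps * (1 - al)) ltac:(lra)
                ltac:(pose proof (cond_pos eps); nra)) as [d [Hd Hsmall]].
    exists (mkposreal d Hd). intros y Hy HyT. simpl in Hy. rewrite ball_R in *.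
    apply Rabs_lt_between in Hy. specialize (Hsmall (T - y) ltac:(lra)).
    pose proof (Rpower_pos (T - y) (1 - al)).
    unfold F. rewrite Rabs_left1.
    + apply (Rmult_lt_reg_r (1 - al)); [lra |].
      replace (- (- Rpower (T - y) (1 - al) / (1 - al) - 0) * (1 - al))
        with (Rpower (T - y) (1 - al)) by (field; lra). exact Hsmall.
    + enough (0 <= Rpower (T - y) (1 - al) / (1 - al)) by lra.
      apply Rdiv_le_0_compat; lra.
Qed.

End SingularKernel.

Lemma balance_of_ge_eta r eta : 0 < eta -> 1 - 3 * eta ^ 2 * (1 + eta) = 0 -> eta <= r ->
  1 / (r * (1 + r)) - 3 * r <= 0.
Proof.
  intros Heta Heq Hr.
  assert (Hcub : eta ^ 2 * (1 + eta) <= r ^ 2 * (1 + r)) by (apply Rmult_le_compat; nra).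
  assert (Hq : 0 < r * (1 + r)) by nra.
  enough (1 / (r * (1 + r)) <= 3 * r) by lra.
  apply (Rmult_le_reg_r (r * (1 + r)) _ _ Hq).
  unfold Rdiv. rewrite Rmult_1_l, Rinv_l by lra. nra.
Qed.

Lemma balance_of_step r s eta : 0 < r -> 0 < s -> 0 < eta -> 1 - 3 * eta ^ 2 * (1 + eta) = 0 ->
  (r < eta -> s <= r ^ 2 * (1 + r) / (1 - 3 * r ^ 2 * (1 + r))) ->
  1 / (r * (1 + r)) - 3 * r <= r / s.
Proof.
  intros Hr Hs Heta Heq Hstep.
  destruct (Rlt_le_dec r eta) as [Hlt | Hge].
  - specialize (Hstep Hlt).
    assert (HD : 0 < 1 - 3 * r ^ 2 * (1 + r)).
    { assert (r ^ 2 * (1 + r) < eta ^ 2 * (1 + eta)) by (apply Rmult_le_0_lt_compat; nra). lra. }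
    set (D := 1 - 3 * r ^ 2 * (1 + r)) in *.
    assert (HsD : s * D <= r ^ 2 * (1 + r)).
    { apply (Rmult_le_compat_r D) in Hstep; [| lra].
      unfold Rdiv in Hstep. rewrite Rmult_assoc, Rinv_l in Hstep by lra. lra. }
    replace (1 / (r * (1 + r)) - 3 * r) with (D / (r * (1 + r))) by (unfold D; field; lra).
    apply (Rmult_le_reg_r (s * (r * (1 + r)))); [nra |].
    replace (D / (r * (1 + r)) * (s * (r * (1 + r)))) with (s * D) by (field; lra).
    replace (r / s * (s * (r * (1 + r)))) with (r ^ 2 * (1 + r)) by (field; lra).
    exact HsD.
  - pose proof (balance_of_ge_eta r eta Heta Heq Hge).
    assert (0 < r / s) by (apply Rdiv_lt_0_compat; lra). lra.
Qed.

Lemma ratio_weight_le rs h h' : 0 < rs -> 0 < h -> rs < h' / h -> rs / (1 + rs) <= h' / (h + h').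
Proof.
  intros Hrs Hh Hr.
  assert (Hh' : rs * h < h').
  { apply (Rmult_lt_compat_r h) in Hr; [| exact Hh].
    unfold Rdiv in Hr. rewrite Rmult_assoc, Rinv_l in Hr by lra. lra. }
  assert (0 < h') by nra.
  apply (Rmult_le_reg_r ((1 + rs) * (h + h'))); [nra |].
  replace (rs / (1 + rs) * ((1 + rs) * (h + h'))) with (rs * (h + h')) by (field; lra).
  replace (h' / (h + h') * ((1 + rs) * (h + h'))) with (h' * (1 + rs)) by (field; lra).
  nra.
Qed.

Lemma balance_scaled hm h h' theta : 0 < hm -> 0 < h -> 0 < h' ->
  1 / (h / hm * (1 + h / hm)) - 3 * (h / hm) <= (1 - theta) * (h / hm / (h' / h)) ->
  hm ^ 3 / (h * (hm + h)) <= h * (3 + (1 - theta) * (h / h')).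
Proof.
  intros Hhm Hh Hh' Hbal.
  replace (hm ^ 3 / (h * (hm + h))) with (hm * (1 / (h / hm * (1 + h / hm)))) by (field; lra).
  replace (h * (3 + (1 - theta) * (h / h')))
    with (hm * (3 * (h / hm) + (1 - theta) * (h / hm / (h' / h)))) by (field; lra).
  apply Rmult_le_compat_l; lra.
Qed.

Definition balanced (t : nat -> R) (theta : R) (i : nat) : Prop :=
  1 / (rho t i * (1 + rho t i)) - 3 * rho t i <= (1 - theta) * (rho t i / rho t (S i)).

Section Mesh.
Variables (al : R) (t : nat -> R).
Hypothesis Hal : 0 < al < 1.
Hypothesis Ht : forall n, t n < t (S n).

Lemma mesh_le m n : (m <= n)%nat -> t m <= t n.
Proof. intros Hmn. induction Hmn; [lra | specialize (Ht m0); lra]. Qed.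

Lemma tau_pos j : (1 <= j)%nat -> 0 < tau t j.
Proof.
  intros Hj. unfold tau. replace j with (S (j - 1)) at 1 by lia. specialize (Ht (j - 1)%nat). lra.
Qed.

Lemma rho_pos i : (2 <= i)%nat -> 0 < rho t i.
Proof. intros Hi. apply Rdiv_lt_0_compat; apply tau_pos; lia. Qed.

Lemma tstar_sub_prev k : tstar al t k - t (k - 1)%nat = sig al * tau t k.
Proof. unfold tstar. ring. Qed.

Lemma tstar_lt k : (1 <= k)%nat -> tstar al t k < t k.
Proof.
  intros Hk. pose proof (tau_pos k Hk). unfold tstar, sig, tau in *. nra.
Qed.

Lemma mesh_lt_tstar k i : (1 <= k)%nat -> (i <= k - 1)%nat -> t i < tstar al t k.
Proof.
  intros Hk Hi. pose proof (mesh_le i (k - 1) Hi). pose proof (tau_pos k Hk).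
  unfold tstar, sig in *. nra.
Qed.

Lemma cell_end k j : tstar al t k - t (j - 1)%nat - tau t j = tstar al t k - t j.
Proof. unfold tau. ring. Qed.

Lemma cell_width k j : (1 <= j)%nat -> (j <= k - 1)%nat ->
  0 < tau t j < tstar al t k - t (j - 1)%nat.
Proof.
  intros Hj Hjk. pose proof (cell_end k j). pose proof (mesh_lt_tstar k j ltac:(lia) Hjk).
  split; [apply tau_pos, Hj | lra].
Qed.

Definition cell_mean (k j : nat) : R := kernel_mean al (tstar al t k - t (j - 1)%nat) (tau t j).
Definition cell_odd (k j : nat) : R := kernel_odd al (tstar al t k - t (j - 1)%nat) (tau t j).

Lemma acoef_cell k j : (1 <= j)%nat -> (j <= k - 1)%nat ->
  acoef al t k j = tau t j * cell_odd k j / (tau t j + tau t (j + 1)) - cell_mean k j.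
Proof.
  intros Hj Hjk. destruct (cell_width k j Hj Hjk).
  apply kernel_acoef; [lra | lra | apply tau_pos; lia].
Qed.

Lemma ccoef_cell k j : (1 <= j)%nat -> (j <= k - 1)%nat ->
  ccoef al t k j = tau t j ^ 2 * cell_odd k j / (tau t (j + 1) * (tau t j + tau t (j + 1))).
Proof.
  intros Hj Hjk. destruct (cell_width k j Hj Hjk).
  apply kernel_ccoef; [lra | lra | apply tau_pos; lia].
Qed.

Lemma ccoef_nonneg k j : (1 <= j)%nat -> (j <= k - 1)%nat -> 0 <= ccoef al t k j.
Proof.
  intros Hj Hjk. destruct (cell_width k j Hj Hjk) as [Hh HhB].
  pose proof (kernel_odd_ge _ _ _ Hal Hh HhB) as HP. fold (cell_odd k j) in HP.
  pose proof (Rpower_pos (tstar al t k - t (j - 1)%nat) (- al - 1)).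
  assert (0 < al * tau t j * Rpower (tstar al t k - t (j - 1)%nat) (- al - 1))
    by (repeat apply Rmult_lt_0_compat; lra).
  pose proof (tau_pos (j + 1) ltac:(lia)).
  rewrite ccoef_cell by assumption.
  apply Rdiv_le_0_compat; [apply Rmult_le_pos; [apply pow_le |] | apply Rmult_lt_0_compat]; lra.
Qed.

Lemma ccoef_le k j : (1 <= j)%nat -> (j <= k - 1)%nat ->
  ccoef al t k j <= al * tau t j ^ 3 * Rpower (tstar al t k - t j) (- al - 1)
                    / (6 * tau t (j + 1) * (tau t j + tau t (j + 1))).
Proof.
  intros Hj Hjk. destruct (cell_width k j Hj Hjk) as [Hh HhB].
  pose proof (kernel_odd_le _ _ _ Hal Hh HhB) as HP. fold (cell_odd k j) in HP.
  rewrite cell_end in HP.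
  pose proof (tau_pos (j + 1) ltac:(lia)).
  rewrite ccoef_cell by assumption.
  replace (al * tau t j ^ 3 * Rpower (tstar al t k - t j) (- al - 1)
           / (6 * tau t (j + 1) * (tau t j + tau t (j + 1))))
    with (tau t j ^ 2 * (al * tau t j * Rpower (tstar al t k - t j) (- al - 1) / 6)
          / (tau t (j + 1) * (tau t j + tau t (j + 1)))) by (field; lra).
  apply Rmult_le_compat_r; [apply Rlt_le, Rinv_0_lt_compat; nra |].
  apply Rmult_le_compat_l; [nra | exact HP].
Qed.

Lemma damped_sum_ge k j theta : 0 <= theta <= 1 -> (1 <= j)%nat -> (j <= k - 1)%nat ->
  al * tau t j * Rpower (tstar al t k - t (j - 1)%nat) (- al - 1) / 6
    * (3 + (1 - theta) * (tau t j / tau t (j + 1)))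
  <= (1 - theta) * ccoef al t k j + acoef al t k j + Rpower (tstar al t k - t j) (- al).
Proof.
  intros Htheta Hj Hjk. destruct (cell_width k j Hj Hjk) as [Hh HhB].
  pose proof (kernel_odd_ge _ _ _ Hal Hh HhB) as HP.
  pose proof (kernel_mean_le _ _ _ Hal Hh HhB) as HI.
  fold (cell_odd k j) in HP. fold (cell_mean k j) in HI. rewrite cell_end in HI.
  pose proof (tau_pos (j + 1) ltac:(lia)) as Hh'.
  rewrite ccoef_cell, acoef_cell by assumption.
  set (h := tau t j) in *. set (h' := tau t (j + 1)) in *.
  set (P := cell_odd k j) in *. set (I := cell_mean k j) in *.
  set (L := al * h * Rpower (tstar al t k - t (j - 1)%nat) (- al - 1)) in *.
  assert (HL : 0 <= L).
  { unfold L. pose proof (Rpower_pos (tstar al t k - t (j - 1)%nat) (- al - 1)).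
    apply Rmult_le_pos; nra. }
  replace ((1 - theta) * (h ^ 2 * P / (h' * (h + h'))) + (h * P / (h + h') - I)
           + Rpower (tstar al t k - t j) (- al))
    with ((1 - theta) * (h / h') * P + theta * (h * P / (h + h'))
          + (Rpower (tstar al t k - t j) (- al) - I)) by (field; lra).
  assert (0 <= theta * (h * P / (h + h'))).
  { apply Rmult_le_pos; [lra | apply Rdiv_le_0_compat; nra]. }
  assert ((1 - theta) * (h / h') * (L / 6) <= (1 - theta) * (h / h') * P).
  { apply Rmult_le_compat_l; [| lra].
    apply Rmult_le_pos; [lra | apply Rlt_le, Rdiv_lt_0_compat; lra]. }
  nra.
Qed.

Lemma Mentry_diag k : (2 <= k)%nat -> Mentry al t k k = ccoef al t k (k - 1) + diag_term al t k.
Proof.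
  intros Hk. unfold Mentry.
  rewrite (proj2 (Nat.leb_le 1 k)), Nat.leb_refl, Nat.eqb_refl, (proj2 (Nat.eqb_neq k 1)) by lia.
  reflexivity.
Qed.

Lemma Mentry_first k : (2 <= k)%nat -> Mentry al t k 1 = - acoef al t k 1.
Proof.
  intros Hk. unfold Mentry.
  rewrite (proj2 (Nat.leb_le 1 k)), (proj2 (Nat.eqb_neq 1 k)) by lia. reflexivity.
Qed.

Lemma Mentry_mid k j : (2 <= j)%nat -> (j < k)%nat ->
  Mentry al t k j = ccoef al t k (j - 1) - acoef al t k j.
Proof.
  intros Hj Hk. unfold Mentry.
  rewrite (proj2 (Nat.leb_le 1 j)), (proj2 (Nat.leb_le j k)), (proj2 (Nat.eqb_neq j k)),
    (proj2 (Nat.eqb_neq j 1)) by lia.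
  reflexivity.
Qed.

Lemma Mentry_le_damped k i theta : 0 <= theta <= 1 -> (1 <= i)%nat -> (i < k)%nat ->
  ((2 <= i)%nat -> balanced t theta i) ->
  Mentry al t k i <= (1 - theta) * ccoef al t k i + Rpower (tstar al t k - t i) (- al).
Proof.
  intros Htheta Hi Hik Hbal.
  pose proof (damped_sum_ge k i theta Htheta Hi ltac:(lia)) as Hsum.
  set (Y := Rpower (tstar al t k - t (i - 1)%nat) (- al - 1)) in *.
  assert (HY : 0 < al * Y / 6)
    by (pose proof (Rpower_pos (tstar al t k - t (i - 1)%nat) (- al - 1)); unfold Y; nra).
  pose proof (tau_pos i Hi) as Hh. pose proof (tau_pos (i + 1) ltac:(lia)) as Hh'.
  destruct (Nat.eq_dec i 1) as [-> | Hi1].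
  - rewrite Mentry_first by lia.
    enough (0 <= al * tau t 1 * Y / 6 * (3 + (1 - theta) * (tau t 1 / tau t (1 + 1)))) by lra.
    apply Rmult_le_pos; [nra |].
    assert (0 <= (1 - theta) * (tau t 1 / tau t (1 + 1)))
      by (apply Rmult_le_pos; [lra | apply Rlt_le, Rdiv_lt_0_compat; lra]).
    lra.
  - rewrite Mentry_mid by lia.
    pose proof (ccoef_le k (i - 1) ltac:(lia) ltac:(lia)) as Hc.
    replace (i - 1 + 1)%nat with i in Hc by lia. fold Y in Hc.
    pose proof (tau_pos (i - 1) ltac:(lia)) as Hhm.
    specialize (Hbal ltac:(lia)). unfold balanced, rho in Hbal.
    replace (S i - 1)%nat with i in Hbal by lia. replace (S i) with (i + 1)%nat in Hbal by lia.
    pose proof (balance_scaled _ _ _ theta Hhm Hh Hh' Hbal) as Hscaled.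
    apply (Rmult_le_compat_l (al * Y / 6)) in Hscaled; [| lra].
    set (hm := tau t (i - 1)) in *. set (h := tau t i) in *. set (h' := tau t (i + 1)) in *.
    assert (al * hm ^ 3 * Y / (6 * h * (hm + h)) = al * Y / 6 * (hm ^ 3 / (h * (hm + h))))
      by (field; lra).
    assert (al * h * Y / 6 * (3 + (1 - theta) * (h / h'))
            = al * Y / 6 * (h * (3 + (1 - theta) * (h / h')))) by (field; lra).
    lra.
Qed.

Lemma diag_term_eq k : (1 <= k)%nat ->
  diag_term al t k = sig al / (1 - al) * Rpower (tstar al t k - t (k - 1)%nat) (- al).
Proof.
  intros Hk. pose proof (tau_pos k Hk). assert (Hsig : 0 < sig al) by (unfold sig; lra).
  unfold diag_term. rewrite tstar_sub_prev, <- Rpower_mult_distr, !Rpower_Ropp by lra.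
  replace (1 - al) with (1 + - al) by ring. rewrite Rpower_plus, Rpower_1, Rpower_Ropp by lra.
  pose proof (Rpower_pos (sig al) al). pose proof (Rpower_pos (tau t k) al).
  field. repeat split; lra.
Qed.

Lemma Mentry_diag_ge k : (1 <= k)%nat -> diag_term al t k <= Mentry al t k k.
Proof.
  intros Hk. destruct (Nat.eq_dec k 1) as [-> | Hk1]; [apply Rle_refl |].
  rewrite Mentry_diag by lia. pose proof (ccoef_nonneg k (k - 1) ltac:(lia) ltac:(lia)). lra.
Qed.

Lemma Mentry_ge_neg_acoef k j : (1 <= j)%nat -> (j < k)%nat -> - acoef al t k j <= Mentry al t k j.
Proof.
  intros Hj Hjk. destruct (Nat.eq_dec j 1) as [-> | Hj1].
  - rewrite Mentry_first by lia. apply Rle_refl.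
  - rewrite Mentry_mid by lia. pose proof (ccoef_nonneg k (j - 1) ltac:(lia) ltac:(lia)). lra.
Qed.

Lemma neg_acoef_ge rs k j : 0 < rs -> (1 <= j)%nat -> (j < k)%nat -> rs < rho t (S j) ->
  rs / (1 + rs) * cell_mean k j <= - acoef al t k j.
Proof.
  intros Hrs Hj Hjk Hrho. destruct (cell_width k j Hj ltac:(lia)) as [Hh HhB].
  pose proof (kernel_odd_le_mean al _ _ Hh HhB) as HPI.
  pose proof (kernel_mean_nonneg al _ _ Hh HhB) as HI.
  fold (cell_odd k j) (cell_mean k j) in HPI, HI.
  unfold rho in Hrho. replace (S j - 1)%nat with j in Hrho by lia.
  replace (S j) with (j + 1)%nat in Hrho by lia.
  pose proof (tau_pos (j + 1) ltac:(lia)) as Hh'.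
  pose proof (ratio_weight_le _ _ _ Hrs Hh Hrho) as Hw.
  rewrite acoef_cell by lia.
  replace (- (tau t j * cell_odd k j / (tau t j + tau t (j + 1)) - cell_mean k j))
    with (tau t j / (tau t j + tau t (j + 1)) * (cell_mean k j - cell_odd k j)
          + tau t (j + 1) / (tau t j + tau t (j + 1)) * cell_mean k j) by (field; lra).
  assert (0 <= tau t j / (tau t j + tau t (j + 1)) * (cell_mean k j - cell_odd k j))
    by (apply Rmult_le_pos; [apply Rlt_le, Rdiv_lt_0_compat |]; lra).
  assert (rs / (1 + rs) * cell_mean k j
          <= tau t (j + 1) / (tau t j + tau t (j + 1)) * cell_mean k j)
    by (apply Rmult_le_compat_r; lra).
  lra.
Qed.

Lemma is_RInt_gen_singular_last k : (1 <= k)%nat ->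
  is_RInt_gen (fun s => Rpower (tstar al t k - s) (- al))
    (at_point (t (k - 1)%nat)) (at_left (tstar al t k)) (tau t k * diag_term al t k).
Proof.
  intros Hk. pose proof (tau_pos k Hk).
  replace (tau t k * diag_term al t k)
    with (Rpower (tstar al t k - t (k - 1)%nat) (1 - al) / (1 - al)).
  - apply is_RInt_gen_singular_end; [exact Hal | apply mesh_lt_tstar; lia].
  - rewrite diag_term_eq by exact Hk.
    replace (1 - al) with (1 + - al) at 1 by ring.
    rewrite Rpower_plus, Rpower_1, tstar_sub_prev by (rewrite tstar_sub_prev; unfold sig; nra).
    field. lra.
Qed.

Lemma is_RInt_gen_singular_cell k j : (1 <= j)%nat -> (j <= k - 1)%nat ->
  is_RInt_gen (fun s => Rpower (tstar al t k - s) (- al))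
    (at_point (t (j - 1)%nat)) (at_left (t j)) (tau t j * cell_mean k j).
Proof.
  intros Hj Hjk. destruct (cell_width k j Hj Hjk) as [Hh HhB].
  replace (tau t j * cell_mean k j)
    with ((Rpower (tstar al t k - t (j - 1)%nat) (1 - al) - Rpower (tstar al t k - t j) (1 - al))
          / (1 - al)).
  - apply is_RInt_gen_singular; [exact Hal | unfold tau in Hh; lra | apply mesh_lt_tstar; lia].
  - unfold cell_mean. rewrite kernel_mean_eq, cell_end by assumption. field. lra.
Qed.

Lemma Mentry_ge_singular_integral rs k j : 0 < rs -> (1 <= j)%nat -> (j <= k)%nat ->
  ((j < k)%nat -> rs < rho t (S j)) ->
  rs / ((1 + rs) * tau t j) *
    RInt_gen (fun s => Rpower (tstar al t k - s) (- al))
      (at_point (t (j - 1)%nat)) (at_left (Rmin (t j) (tstar al t k)))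
  <= Mentry al t k j.
Proof.
  intros Hrs Hj Hjk Hrho. pose proof (tau_pos j Hj) as Hh.
  destruct (Nat.eq_dec j k) as [<- | Hjk'].
  - rewrite Rmin_right by (apply Rlt_le, tstar_lt, Hj).
    rewrite (is_RInt_gen_unique (V := R_CompleteNormedModule) _ _
               (is_RInt_gen_singular_last j Hj)).
    pose proof (Mentry_diag_ge j Hj).
    assert (0 < diag_term al t j).
    { rewrite diag_term_eq by exact Hj.
      pose proof (Rpower_pos (tstar al t j - t (j - 1)%nat) (- al)).
      apply Rmult_lt_0_compat; [apply Rdiv_lt_0_compat; unfold sig |]; lra. }
    assert (rs / (1 + rs) < 1) by (apply (Rdiv_lt_1 rs (1 + rs)); lra).
    replace (rs / ((1 + rs) * tau t j) * (tau t j * diag_term al t j))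
      with (rs / (1 + rs) * diag_term al t j) by (field; lra).
    nra.
  - rewrite Rmin_left by (left; apply mesh_lt_tstar; lia).
    pose proof (is_RInt_gen_singular_cell k j Hj ltac:(lia)) as Hcell.
    rewrite (is_RInt_gen_unique (V := R_CompleteNormedModule) _ _ Hcell).
    replace (rs / ((1 + rs) * tau t j) * (tau t j * cell_mean k j))
      with (rs / (1 + rs) * cell_mean k j) by (field; lra).
    pose proof (neg_acoef_ge rs k j Hrs Hj ltac:(lia) (Hrho ltac:(lia))).
    pose proof (Mentry_ge_neg_acoef k j Hj ltac:(lia)). lra.
Qed.

Lemma Mentry_step_ge k j : (2 <= j)%nat -> (j <= k - 1)%nat ->
  (forall i, (2 <= i)%nat -> balanced t 0 i) ->
  al * tau t j / (tau t j + tau t (j + 1)) *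
    RInt (fun s => (tau t j + tau t (j + 1) - s * tau t j) * (1 - s) *
                   Rpower (tstar al t k - t (j - 1)%nat - s * tau t j) (- al - 1)) 0 1
  <= Mentry al t k j - Mentry al t k (j - 1).
Proof.
  intros Hj Hjk Hbal. destruct (cell_width k j ltac:(lia) Hjk) as [Hh HhB].
  pose proof (tau_pos (j + 1) ltac:(lia)) as Hh'.
  pose proof (Mentry_le_damped k (j - 1) 0 ltac:(lra) ltac:(lia) ltac:(lia) (Hbal (j - 1)%nat))
    as Hprev.
  rewrite (kernel_weighted_integral al _ _ Hal Hh HhB).
  fold (cell_mean k j) (cell_odd k j).
  rewrite Mentry_mid, acoef_cell by lia.
  replace (al * tau t j / (tau t j + tau t (j + 1)) *
           (((tau t j + tau t (j + 1))
               * (cell_mean k j - Rpower (tstar al t k - t (j - 1)%nat) (- al))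
             - tau t j * cell_odd k j) / (al * tau t j)))
    with (cell_mean k j - Rpower (tstar al t k - t (j - 1)%nat) (- al)
          - tau t j * cell_odd k j / (tau t j + tau t (j + 1))) by (field; lra).
  lra.
Qed.

Lemma Mentry_diag_step_ge k : (2 <= k)%nat -> (forall i, (2 <= i)%nat -> balanced t 0 i) ->
  al / (2 * (1 - al) * Rpower (sig al * tau t k) al) <= Mentry al t k k - Mentry al t k (k - 1).
Proof.
  intros Hk Hbal.
  pose proof (Mentry_le_damped k (k - 1) 0 ltac:(lra) ltac:(lia) ltac:(lia) (Hbal (k - 1)%nat))
    as Hprev.
  rewrite Mentry_diag, diag_term_eq by lia.
  rewrite tstar_sub_prev, Rpower_Ropp in *.
  pose proof (Rpower_pos (sig al * tau t k) al).
  set (Q := Rpower (sig al * tau t k) al) in *.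
  replace (sig al / (1 - al) * / Q) with (/ Q + al / (2 * (1 - al) * Q))
    by (unfold sig; field; lra).
  lra.
Qed.

Lemma Mentry_damped_diag_step_nonneg k : (2 <= k)%nat ->
  (forall i, (2 <= i)%nat -> balanced t (al / (2 - al)) i) ->
  0 <= (1 - al) / sig al * Mentry al t k k - Mentry al t k (k - 1).
Proof.
  intros Hk Hbal.
  assert (Htheta : 0 <= al / (2 - al) <= 1)
    by (split; [apply Rdiv_le_0_compat | apply (Rdiv_le_1 al (2 - al))]; lra).
  pose proof (Mentry_le_damped k (k - 1) _ Htheta ltac:(lia) ltac:(lia) (Hbal (k - 1)%nat))
    as Hprev.
  rewrite Mentry_diag, diag_term_eq by lia.
  (* [(1 - al) / sig = 1 - al / (2 - al)] *)
  replace ((1 - al) / sig al * (ccoef al t k (k - 1)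
             + sig al / (1 - al) * Rpower (tstar al t k - t (k - 1)%nat) (- al)))
    with ((1 - al / (2 - al)) * ccoef al t k (k - 1) + Rpower (tstar al t k - t (k - 1)%nat) (- al))
    by (unfold sig; field; lra).
  lra.
Qed.

Lemma balanced_of_mesh_step eta i : 0 < eta -> 1 - 3 * eta ^ 2 * (1 + eta) = 0 ->
  (2 <= i)%nat ->
  (rho t i < eta ->
   rho t (S i) <= rho t i ^ 2 * (1 + rho t i) / (1 - 3 * rho t i ^ 2 * (1 + rho t i))) ->
  balanced t 0 i.
Proof.
  intros Heta Heq Hi Hstep. unfold balanced. rewrite Rminus_0_r, Rmult_1_l.
  apply (balance_of_step _ _ eta); try apply rho_pos; auto; lia.
Qed.

Lemma balanced_of_ge_eta eta theta i : 0 < eta -> 1 - 3 * eta ^ 2 * (1 + eta) = 0 ->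
  theta <= 1 -> (2 <= i)%nat -> eta <= rho t i -> balanced t theta i.
Proof.
  intros Heta Heq Htheta Hi Hr. unfold balanced.
  pose proof (balance_of_ge_eta _ _ Heta Heq Hr).
  assert (0 <= rho t i / rho t (S i)) by (apply Rlt_le, Rdiv_lt_0_compat; apply rho_pos; lia).
  assert (0 <= (1 - theta) * (rho t i / rho t (S i))) by (apply Rmult_le_pos; lra).
  lra.
Qed.

End Mesh.

Theorem lemma2 (alpha : R) (t : nat -> R) (rs eta : R) :
  0 < alpha < 1 ->
  (* rho_* : the unique positive root of rho(1+rho) = 1 - 3 rho^2 (1+rho) *)
  0 < rs -> rs * (1 + rs) = 1 - 3 * rs ^ 2 * (1 + rs) ->
  (* eta : the unique positive root of 1 - 3 rho^2 (1+rho) = 0 *)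
  0 < eta -> 1 - 3 * eta ^ 2 * (1 + eta) = 0 ->
  t 0%nat = 0 ->
  (forall n : nat, t n < t (S n)) ->
  (forall k : nat, (2 <= k)%nat ->
     rs < rho t k /\ rs < rho t (S k) /\
     (rho t k < eta ->
      rho t (S k) <= rho t k ^ 2 * (1 + rho t k) / (1 - 3 * rho t k ^ 2 * (1 + rho t k)))) ->
  (* Q1 *)
  (forall k j : nat, (1 <= j)%nat -> (j <= k)%nat ->
     Mentry alpha t k j >=
     rs / ((1 + rs) * tau t j) *
     RInt_gen (fun s => Rpower (tstar alpha t k - s) (- alpha))
       (at_point (t (j - 1)%nat)) (at_left (Rmin (t j) (tstar alpha t k)))) /\
  (* Q2, first part *)
  (forall k j : nat, (2 <= j)%nat -> (j <= k - 1)%nat ->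
     Mentry alpha t k j - Mentry alpha t k (j - 1)%nat >=
     alpha * tau t j / (tau t j + tau t (j + 1)%nat) *
     RInt (fun s => (tau t j + tau t (j + 1)%nat - s * tau t j) * (1 - s) *
                    Rpower (tstar alpha t k - t (j - 1)%nat - s * tau t j) (- alpha - 1))
       0 1) /\
  (* Q2, second part *)
  (forall k : nat, (2 <= k)%nat ->
     Mentry alpha t k k - Mentry alpha t k (k - 1)%nat >=
     alpha / (2 * (1 - alpha) * Rpower (sig alpha * tau t k) alpha)) /\
  (* Q3 *)
  ((forall k : nat, (2 <= k)%nat -> rho t k >= eta) ->
   forall k : nat, (2 <= k)%nat ->
     (1 - alpha) / sig alpha * Mentry alpha t k k - Mentry alpha t k (k - 1)%nat >= 0).
Proof.
  (* only [0 < rs] matters for rho_* *)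
  intros Hal Hrs _ Heta Heq _ Ht Hmesh.
  assert (Hbal : forall i, (2 <= i)%nat -> balanced t 0 i).
  { intros i Hi. destruct (Hmesh i Hi) as (_ & _ & Hstep).
    exact (balanced_of_mesh_step t Ht eta i Heta Heq Hi Hstep). }
  split; [| split; [| split]].
  - intros k j Hj Hjk. apply Rle_ge, Mentry_ge_singular_integral; auto.
    intros _. destruct (Nat.eq_dec j 1) as [-> | Hj1].
    + apply (Hmesh 2%nat); lia.
    + apply (Hmesh j); lia.
  - intros k j Hj Hjk. apply Rle_ge, Mentry_step_ge; auto.
  - intros k Hk. apply Rle_ge, Mentry_diag_step_ge; auto.
  - intros Hge k Hk. apply Rle_ge, Mentry_damped_diag_step_nonneg; auto.
    intros i Hi. apply (balanced_of_ge_eta t Ht eta); auto.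
    + apply (Rdiv_le_1 alpha (2 - alpha)); lra.
    + apply Rge_le, Hge, Hi.
Qed.
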